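(* For every rule of G3lp with premises $S_1,\dots,S_k$ ($k\ge 0$) and conclusion $S$: if each forgetful projection $S_i^\circ$ is derivable in G3s + $(\Box\mathrm{Cut})$, then $S^\circ$ is derivable in G3s + $(\Box\mathrm{Cut})$. That is, the forgetful projection of every G3lp rule is admissible in G3s + $(\Box\mathrm{Cut})$.
   Context: S4 formulas: $A ::= \bot \mid P \mid A_0\to A_1 \mid \Box A$ ($P$ atomic). LP terms: $t ::= c \mid x \mid t_0\cdot t_1 \mid t_0+t_1 \mid\ !t$ ($c$ constants, $x$ variables); LP formulas: $A ::= \bot \mid P \mid A_0\to A_1 \mid t{:}A$. Axioms of LP: A0 a finite set of axiom schemes of classical propositional logic; A1 $t{:}F\to F$; A2 $s{:}(F\to G)\to(t{:}F\to (s\cdot t){:}G)$; A3 $t{:}F\to\ !t{:}(t{:}F)$; A4 $s{:}F\to(s+t){:}F$ and $t{:}F\to(s+t){:}F$. Forgetful projection: $\bot^\circ=\bot$, $P^\circ=P$, $(A\to B)^\circ=A^\circ\to B^\circ$, $(t{:}A)^\circ=\Box A^\circ$, extended to multisets and sequents componentwise. Sequents $\Gamma\supset\Delta$ use finite multisets; $\Box\Gamma:=\{\Box B\mid B\in\Gamma\}$. G3s rules: (Ax) $P,\Gamma\supset\Delta,P$ ($P$ atomic); $(\bot\supset)$ $\bot,\Gamma\supset\Delta$; $(\to\supset)$ from $\Gamma\supset\Delta,A$ and $B,\Gamma\supset\Delta$ infer $A\to B,\Gamma\supset\Delta$; $(\supset\to)$ from $A,\Gamma\supset\Delta,B$ infer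 $\Gamma\supset\Delta,A\to B$; $(\Box\supset)$ from $A,\Box A,\Gamma\supset\Delta$ infer $\Box A,\Gamma\supset\Delta$; $(\supset\Box)$ from $\Box\Gamma\supset A$ infer $\Gamma',\Box\Gamma\supset\Delta',\Box A$. The rule $(\Box\mathrm{Cut})$: from $\Gamma\supset\Delta,\Box A,\Box B$ and $\Gamma\supset\Delta,\Box(A\to B),\Box B$ infer $\Gamma\supset\Delta,\Box B$. G3lp has the rules (Ax), $(\bot\supset)$, $(\to\supset)$, $(\supset\to)$ (for LP formulas) and: $(\supset{:})_c$ from $\supset A$ infer $\Gamma\supset\Delta,c{:}A$, where $A$ is an axiom A0–A4 and $c$ a constant; $(\supset{:})_t$ from $t{:}A\supset A$ infer $t{:}A,\Gamma\supset\Delta,t{:}A$; $({:}\supset)$ from $A,t{:}A,\Gamma\supset\Delta$ infer $t{:}A,\Gamma\supset\Delta$; $(\supset !)$ from $\Gamma\supset\Delta,t{:}A,\,!t{:}t{:}A$ infer $\Gamma\supset\Delta,\,!t{:}t{:}A$; $(\supset +)$ from $\Gamma\supset\Delta,s{:}A,t{:}A,(s+t){:}A$ infer $\Gamma\supset\Delta,(s+t){:}A$; $(\supset\cdot)$ from $\Gamma\supset\Delta,s{:}(A\to B),(s\cdot t){:}B$ and $\Gamma\supset\Delta,t{:}A,(s\cdot t){:}B$ infer $\Gamma\supset\Delta,(s\cdot t){:}B$. *)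

From Stdlib Require Import List Permutation.
Import ListNotations.

Inductive sform : Type :=
| SBot : sform
| SAt : nat -> sform
| SImp : sform -> sform -> sform
| SBox : sform -> sform.

(* LP terms: constants c_n, variables x_n *)
Inductive lterm : Type :=
| TC : nat -> lterm
| TV : nat -> lterm
| TApp : lterm -> lterm -> lterm
| TSum : lterm -> lterm -> lterm
| TBang : lterm -> lterm.

Inductive lform : Type :=
| LBot : lform
| LAt : nat -> lform
| LImp : lform -> lform -> lform
| LPf : lterm -> lform -> lform.

(* A0: a fixed finite set of axiom schemes of classical propositional
   logic (complete for the bot/-> language). *)
Inductive A0 : lform -> Prop :=
| A0_K : forall A B, A0 (LImp A (LImp B A))
| A0_S : forall A B C,
    A0 (LImp (LImp A (LImp B C)) (LImp (LImp A B) (LImp A C)))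
| A0_DN : forall A, A0 (LImp (LImp (LImp A LBot) LBot) A).

Inductive LPaxiom : lform -> Prop :=
| Ax_A0 : forall A, A0 A -> LPaxiom A
| Ax_A1 : forall t F, LPaxiom (LImp (LPf t F) F)
| Ax_A2 : forall s t F G,
    LPaxiom (LImp (LPf s (LImp F G)) (LImp (LPf t F) (LPf (TApp s t) G)))
| Ax_A3 : forall t F, LPaxiom (LImp (LPf t F) (LPf (TBang t) (LPf t F)))
| Ax_A4l : forall s t F, LPaxiom (LImp (LPf s F) (LPf (TSum s t) F))
| Ax_A4r : forall s t F, LPaxiom (LImp (LPf t F) (LPf (TSum s t) F)).

(* Sequents Gamma ⊃ Delta: pairs of lists, read as multisets
   (derivability in G3s is closed under permutation, see s_perm). *)
Definition sseq : Type := (list sform * list sform)%type.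
Definition lseq : Type := (list lform * list lform)%type.

Fixpoint fproj (A : lform) : sform :=
  match A with
  | LBot => SBot
  | LAt p => SAt p
  | LImp A B => SImp (fproj A) (fproj B)
  | LPf _ A => SBox (fproj A)
  end.

Definition fproj_seq (S : lseq) : sseq :=
  (map fproj (fst S), map fproj (snd S)).

(* Derivability in G3s + (BoxCut).  Principal formulas are written at the
   head of the lists; the permutation rule makes antecedent/succedent
   multisets. *)
Inductive G3sC : list sform -> list sform -> Prop :=
| s_ax : forall p G D, G3sC (SAt p :: G) (SAt p :: D)
| s_botL : forall G D, G3sC (SBot :: G) D
| s_impL : forall A B G D,
    G3sC G (A :: D) -> G3sC (B :: G) D -> G3sC (SImp A B :: G) D
| s_impR : forall A B G D,
    G3sC (A :: G) (B :: D) -> G3sC G (SImp A B :: D)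
| s_boxL : forall A G D,
    G3sC (A :: SBox A :: G) D -> G3sC (SBox A :: G) D
| s_boxR : forall A G G' D',
    G3sC (map SBox G) [A] -> G3sC (G' ++ map SBox G) (SBox A :: D')
| s_boxcut : forall A B G D,
    G3sC G (SBox A :: SBox B :: D) ->
    G3sC G (SBox (SImp A B) :: SBox B :: D) ->
    G3sC G (SBox B :: D)
| s_perm : forall G D G' D',
    G3sC G D -> Permutation G G' -> Permutation D D' -> G3sC G' D'.

Definition G3sC_derivable (S : sseq) : Prop := G3sC (fst S) (snd S).

Inductive lp_rule : list lseq -> lseq -> Prop :=
| lp_ax : forall p G D, lp_rule [] (LAt p :: G, LAt p :: D)
| lp_botL : forall G D, lp_rule [] (LBot :: G, D)
| lp_impL : forall A B G D,
    lp_rule [(G, A :: D); (B :: G, D)] (LImp A B :: G, D)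
| lp_impR : forall A B G D,
    lp_rule [(A :: G, B :: D)] (G, LImp A B :: D)
| lp_colon_c : forall A c G D,
    LPaxiom A -> lp_rule [([], [A])] (G, LPf (TC c) A :: D)
| lp_colon_t : forall t A G D,
    lp_rule [([LPf t A], [A])] (LPf t A :: G, LPf t A :: D)
| lp_colonL : forall t A G D,
    lp_rule [(A :: LPf t A :: G, D)] (LPf t A :: G, D)
| lp_bang : forall t A G D,
    lp_rule [(G, LPf t A :: LPf (TBang t) (LPf t A) :: D)]
            (G, LPf (TBang t) (LPf t A) :: D)
| lp_plus : forall s t A G D,
    lp_rule [(G, LPf s A :: LPf t A :: LPf (TSum s t) A :: D)]
            (G, LPf (TSum s t) A :: D)
| lp_dot : forall s t A B G D,
    lp_rule [(G, LPf s (LImp A B) :: LPf (TApp s t) B :: D);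
             (G, LPf t A :: LPf (TApp s t) B :: D)]
            (G, LPf (TApp s t) B :: D).

(* Propositional rules, the axioms, (:⊃) and (⊃:)_t project directly onto
   G3s rules, and (⊃:)_c is necessitation of the projected axiom.  The
   remaining rules need three modal facts about the succedent:
   - box contraction: two copies of □B on the right merge into one, by a
     box cut against the provable □(B → B); this settles (⊃+);
   - the projection of (⊃·) is exactly an instance of (BoxCut);
   - the S4 axiom 4 as a derived rule: any succedent occurrence of □a may
     be strengthened to □□a.  This is proved by induction on derivations,
     tracking the strengthened positions with the relation [box_lift]; the
     only non-trivial cases are (⊃□), where one extra (⊃□) step suffices,
     and (BoxCut), which is re-done one box higher using the provable
     axiom K.  Strengthening then contraction settles (⊃!). *)

From Stdlib Require Import List Permutation.
Import ListNotations.

Lemma G3sC_permL G G' D : G3sC G D -> Permutation G G' -> G3sC G' D.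
Proof. intros H HP. exact (s_perm G D G' D H HP (Permutation_refl D)). Qed.

Lemma G3sC_permR G D D' : G3sC G D -> Permutation D D' -> G3sC G D'.
Proof. intros H HP. exact (s_perm G D G D' H (Permutation_refl G) HP). Qed.

Lemma perm_head_third {T : Type} (x y z : T) l :
  Permutation (z :: x :: y :: l) (x :: y :: z :: l).
Proof.
  eapply perm_trans; [apply perm_swap | apply perm_skip, perm_swap].
Qed.

Lemma boxR_single A B G D :
  G3sC [SBox B] [A] -> G3sC (SBox B :: G) (SBox A :: D).
Proof.
  intro H. apply (G3sC_permL (G ++ map SBox [B])).
  - exact (s_boxR A [B] G D H).
  - simpl. apply Permutation_sym, Permutation_cons_append.
Qed.

Lemma G3sC_identity A : forall G D, G3sC (A :: G) (A :: D).
Proof.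
  induction A as [| p | A1 IH1 A2 IH2 | A IH]; intros G D.
  - apply s_botL.
  - apply s_ax.
  - apply s_impR. apply (G3sC_permL (SImp A1 A2 :: A1 :: G)); [| apply perm_swap].
    apply s_impL; [apply IH1 | apply IH2].
  - apply boxR_single. apply s_boxL. apply IH.
Qed.

Lemma necessitation P G D : G3sC [] [P] -> G3sC G (SBox P :: D).
Proof.
  intro H. rewrite <- (app_nil_r G). exact (s_boxR P [] G D H).
Qed.

Lemma box_mp P Q G D :
  G3sC G (SBox P :: SBox Q :: D) -> G3sC [] [SImp P Q] -> G3sC G (SBox Q :: D).
Proof.
  intros H Himp. apply (s_boxcut P Q); [exact H | apply necessitation, Himp].
Qed.

Lemma box_contraction B G D :
  G3sC G (SBox B :: SBox B :: D) -> G3sC G (SBox B :: D).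
Proof.
  intro H. apply (box_mp B B); [exact H | apply s_impR, G3sC_identity].
Qed.

Lemma weakenR G D : G3sC G D -> forall F, G3sC G (F :: D).
Proof.
  induction 1 as [p G D | G D | A B G D _ IH1 _ IH2 | A B G D _ IH
                 | A G D _ IH | A G G' D' H | A B G D _ IH1 _ IH2
                 | G D G' D' _ IH HG HD]; intro F.
  - apply (G3sC_permR _ (SAt p :: F :: D)); [apply s_ax | apply perm_swap].
  - apply s_botL.
  - apply s_impL; [apply (G3sC_permR _ (F :: A :: D)); [apply IH1 | apply perm_swap] | apply IH2].
  - apply (G3sC_permR _ (SImp A B :: F :: D)); [| apply perm_swap].
    apply s_impR. apply (G3sC_permR _ (F :: B :: D)); [apply IH | apply perm_swap].
  - apply s_boxL, IH.
  - apply (G3sC_permR _ (SBox A :: F :: D')); [apply s_boxR, H | apply perm_swap].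
  - apply (G3sC_permR _ (SBox B :: F :: D)); [| apply perm_swap].
    apply (s_boxcut A B).
    + apply (G3sC_permR _ (F :: SBox A :: SBox B :: D)); [apply IH1 | apply perm_head_third].
    + apply (G3sC_permR _ (F :: SBox (SImp A B) :: SBox B :: D));
        [apply IH2 | apply perm_head_third].
  - exact (s_perm G (F :: D) G' (F :: D') (IH F) HG (perm_skip F HD)).
Qed.

Lemma axiom_K P Q : G3sC [] [SImp (SBox (SImp P Q)) (SImp (SBox P) (SBox Q))].
Proof.
  apply s_impR, s_impR.
  apply (s_boxR Q [P; SImp P Q] [] []). simpl. apply s_boxL.
  apply (G3sC_permL [SBox (SImp P Q); P; SBox P]); [| apply perm_head_third].
  apply s_boxL, s_impL.
  - apply (G3sC_permL (P :: SBox (SImp P Q) :: [SBox P])); [apply G3sC_identity | apply perm_swap].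
  - apply G3sC_identity.
Qed.

(* (BoxCut) one box higher: with K, a cut on □A, □a lifts to □□A, □□a. *)
Lemma box_cut_lifted A a G D :
  G3sC G (SBox (SBox A) :: SBox (SBox a) :: D) ->
  G3sC G (SBox (SBox (SImp A a)) :: SBox (SBox a) :: D) ->
  G3sC G (SBox (SBox a) :: D).
Proof.
  intros Hcut Himp. apply (s_boxcut (SBox A) (SBox a)); [exact Hcut |].
  apply (box_mp (SBox (SImp A a))); [| apply axiom_K].
  (* the missing premise □(□A → □a), □□a follows from □□(A → a), □□a by K *)
  apply (G3sC_permR _ (SBox (SImp (SBox A) (SBox a))
                       :: SBox (SBox (SImp A a)) :: SBox (SBox a) :: D));
    [apply weakenR, Himp | apply perm_swap].
Qed.

(* [box_lift x y]: y is x, or x is □a and y is □□a (an instance of axiom 4). *)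
Inductive box_lift : sform -> sform -> Prop :=
| lift_refl x : box_lift x x
| lift_box a : box_lift (SBox a) (SBox (SBox a)).

Lemma Forall2_lift_refl l : Forall2 box_lift l l.
Proof. induction l; constructor; [apply lift_refl | assumption]. Qed.

(* Axiom 4 as a derived rule: succedent formulas may be strengthened
   pointwise along [box_lift]. *)
Lemma box_lift_succedent G D :
  G3sC G D -> forall D2, Forall2 box_lift D D2 -> G3sC G D2.
Proof.
  induction 1 as [p G D | G D | A B G D _ IH1 _ IH2 | A B G D _ IH
                 | A G D _ IH | A G G' D' H | A B G D _ IH1 _ IH2
                 | G D G' D' _ IH HG HD]; intros D2 HF.
  - inversion HF as [| x y l l' Hl _]; subst. inversion Hl; subst. apply s_ax.
  - apply s_botL.
  - apply s_impL; [apply IH1; constructor; [apply lift_refl | exact HF] | exact (IH2 _ HF)].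
  - inversion HF as [| x y l l' Hl Hrest]; subst. inversion Hl; subst.
    apply s_impR, IH. constructor; [apply lift_refl | exact Hrest].
  - apply s_boxL, IH, HF.
  - inversion HF as [| x y l l' Hl _]; subst. inversion Hl; subst.
    + apply s_boxR, H.
    + apply s_boxR. exact (s_boxR A G [] [] H).
  - inversion HF as [| x y l l' Hl Hrest]; subst. inversion Hl; subst.
    + apply (s_boxcut A).
      * apply IH1, Forall2_cons, Forall2_cons; [apply lift_refl | apply lift_refl | exact Hrest].
      * apply IH2, Forall2_cons, Forall2_cons; [apply lift_refl | apply lift_refl | exact Hrest].
    + apply (box_cut_lifted A).
      * apply IH1, Forall2_cons, Forall2_cons; [apply lift_box | apply lift_box | exact Hrest].
      * apply IH2, Forall2_cons, Forall2_cons; [apply lift_box | apply lift_box | exact Hrest].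
  - destruct (Permutation_Forall2 (Permutation_sym HD) HF) as [D1 [HP HF1]].
    exact (s_perm G D1 G' D2 (IH D1 HF1) HG (Permutation_sym HP)).
Qed.

Theorem mainTheorem2 :
  forall (prems : list lseq) (concl : lseq),
    lp_rule prems concl ->
    (forall S, In S prems -> G3sC_derivable (fproj_seq S)) ->
    G3sC_derivable (fproj_seq concl).
Proof.
  intros prems concl Hrule Hprems. unfold G3sC_derivable, fproj_seq in *.
  destruct Hrule; simpl in *.
  - apply s_ax.
  - apply s_botL.
  - apply s_impL; [exact (Hprems (G, A :: D) (or_introl eq_refl))
                  | exact (Hprems (B :: G, D) (or_intror (or_introl eq_refl)))].
  - apply s_impR. exact (Hprems (A :: G, B :: D) (or_introl eq_refl)).
  - apply necessitation. exact (Hprems ([], [A]) (or_introl eq_refl)).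
  - apply boxR_single. exact (Hprems ([LPf t A], [A]) (or_introl eq_refl)).
  - apply s_boxL. exact (Hprems (A :: LPf t A :: G, D) (or_introl eq_refl)).
  - (* (⊃!): strengthen □A to □□A, then contract *)
    apply box_contraction. apply (box_lift_succedent _ _ (Hprems _ (or_introl eq_refl))).
    constructor; [apply lift_box | apply Forall2_lift_refl].
  - apply box_contraction, box_contraction. exact (Hprems _ (or_introl eq_refl)).
  - (* (⊃·) is (BoxCut) on the projection: the t-premise is its first premise *)
    apply (s_boxcut (fproj A));
      [exact (Hprems _ (or_intror (or_introl eq_refl))) | exact (Hprems _ (or_introl eq_refl))].
Qed.
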